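(* Let $n\ge 3$ and $k\ge 0$ be integers and let $G_n^k$ be the graph of critical pairs of the crown $S_n^k$ (defined in the context). Then the maximum size of an independent set in $G_n^k$ is $(k+1)(k+2)/2$.
   Context: For integers $n\ge3$, $k\ge0$, the crown $S_n^k$ is the poset with ground set $A\cup B$, where $A=\{a_1,\dots,a_{n+k}\}$ and $B=\{b_1,\dots,b_{n+k}\}$, indices interpreted cyclically modulo $n+k$. Elements of $A$ are pairwise incomparable, elements of $B$ are pairwise incomparable, and for $a_i\in A$, $b_j\in B$: $a_i$ is incomparable to $b_j$ when $j\in\{i,i+1,\dots,i+k\}$ (mod $n+k$), and $a_i<b_j$ otherwise. Let $\mathrm{Inc}(A,B)$ be the set of pairs $(a,b)\in A\times B$ with $a$ incomparable to $b$. The graph $G_n^k$ has vertex set $\mathrm{Inc}(A,B)$, and $(a,b)$ is adjacent to $(x,y)$ if and only if $a<y$ and $x<b$ in $S_n^k$. *)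

From mathcomp Require Import all_boot.
Unset Printing Implicit Defensive.

(* Crown S_n^k with m = n + k: A = {a_i}, B = {b_j}, indices i, j : 'I_(n+k)
   (taken 0-based, cyclically modulo n+k).
   Ground set: 'I_(n+k) + 'I_(n+k), inl i = a_i, inr j = b_j. *)

(* a_i is incomparable to b_j iff j in {i, i+1, ..., i+k} (mod n+k). *)
Definition crown_inc (n k : nat) (i j : 'I_(n + k)) : bool :=
  ((j + (n + k) - i) %% (n + k) <= k).

Definition crown_lt (n k : nat) (x y : 'I_(n + k) + 'I_(n + k)) : bool :=
  match x, y with
  | inl i, inr j => ~~ crown_inc n k i j
  | _, _ => false
  end.

Definition IncAB (n k : nat) : {set ('I_(n + k) * 'I_(n + k))%type} :=
  [set p | crown_inc n k p.1 p.2].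

Definition Gadj (n k : nat) (u v : ('I_(n + k) * 'I_(n + k))%type) : bool :=
  crown_lt n k (inl u.1) (inr v.2) && crown_lt n k (inl v.1) (inr u.2).

Definition Gindep (n k : nat) (S : {set ('I_(n + k) * 'I_(n + k))%type}) : bool :=
  (S \subset IncAB n k) && [forall u in S, forall v in S, ~~ Gadj n k u v].

(* Lower bound: the pairs (a_i, b_j) with i <= j <= k form an independent set
   of size (k+1)(k+2)/2.

   Upper bound: let S be independent, write m = n + k, col j for the set of
   a_i with (a_i, b_j) in S, and r for the number of nonempty columns.  Say
   that j is below j' when some a_i in col j satisfies a_i < b_j'.  By
   independence, j below j' and j' below j never both hold, so the nonempty
   columns carry at most r(r-1)/2 such pairs.  A nonempty column j is below at
   least |col j| + n - 2 columns: the cyclic predecessors of its elements, and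
   n - 2 further predecessors of its element farthest from b_j; at most m - r
   of them are empty.  Summing over j gives
   |S| + r(n-2) <= r(r-1)/2 + r(m-r), and the resulting bound on |S| is
   largest, equal to (k+1)(k+2)/2, at r = k+1. *)

From mathcomp Require Import all_boot zify.

Lemma cyclic_subP m x y : y < m -> x < m ->
  ((x + m - y) %% m = x - y /\ y <= x) \/ ((x + m - y) %% m = x + m - y /\ x < y).
Proof.
move=> y_lt x_lt; case: (leqP y x) => [le_yx|lt_xy]; [left | right]; split=> //.
  by rewrite -addnBAC // modnDr modn_small //; lia.
by rewrite modn_small //; lia.
Qed.

(* Replaces every cyclic difference (x + m - y) %% m in the goal, innermost
   first, by its two possible values, then calls lia; the bounds x, y < m
   must be in the context. *)
Ltac cyclic_lia :=
  repeat match goal with |- context[(?x + ?m - ?y) %% ?m] =>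
    lazymatch x with context[_ %% _] => fail | _ => idtac end;
    case: (@cyclic_subP m x y ltac:(lia) ltac:(lia)) => [[-> ?]|[-> ?]] end;
  lia.

(* crown_inc n k i j is convertible to cdist (n + k) i j <= k. *)
Definition cdist (m i j : nat) : nat := (j + m - i) %% m.

Lemma card_pairs_by_snd (T1 T2 : finType) (A : {set T1 * T2}) :
  #|A| = \sum_(y : T2) #|[set x | (x, y) \in A]|.
Proof.
transitivity (\sum_(p : T1 * T2) ((p.1, p.2) \in A : nat)).
  by rewrite -sum1_card big_mkcond; apply: eq_bigr => -[x y] _; case: (_ \in A).
rewrite -(pair_bigA _ (fun x y => ((x, y) \in A) : nat)) exchange_big /=.
by apply: eq_bigr => y _; rewrite -sum1_card [RHS]big_mkcond; apply: eq_bigr => x _; rewrite inE.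
Qed.

Lemma card_ord_le m (j : 'I_m) : #|[set i : 'I_m | i <= j]| = j.+1.
Proof.
rewrite -sum1dep_card (eq_bigl (fun i : 'I_m => i < j.+1)) => [|i]; last by rewrite ltnS.
by rewrite -(big_ord_widen _ (fun=> 1) (ltn_ord j)) sum1_card card_ord.
Qed.

Lemma card_le_in_setC (T : finType) (P : pred T) (A : {set T}) :
  #|[set y | P y]| <= #|[set y in A | P y]| + #|~: A|.
Proof.
rewrite -(cardsID A [set y | P y]) leq_add //; last first.
  by apply: subset_leq_card; rewrite setDE subsetIr.
by apply/eq_leq/eq_card => y; rewrite !inE andbC.
Qed.

Lemma sum_card_asym (T : finType) (e : rel T) (A : {set T}) :
  irreflexive e -> (forall x y, e x y -> ~~ e y x) ->
  2 * \sum_(x in A) #|[set y in A | e x y]| <= #|A| * #|A|.-1.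
Proof.
move=> e_irr e_asym.
have cardE x : #|[set y in A | e x y]| = \sum_(y in A) e x y.
  by rewrite -sum1dep_card big_mkcondr; apply: eq_bigr => y _; case: (e x y).
rewrite mul2n -addnn {2}(eq_bigr _ (fun x _ => cardE x)) exchange_big /=.
rewrite (eq_bigr _ (fun x _ => cardE x)) -big_split -sum_nat_const /=.
apply: leq_sum => x xA; rewrite -big_split /= -sum1_card.
rewrite (bigD1 x xA) /= [in leqRHS](bigD1 x xA) /= e_irr !add0n.
apply: leq_sum => y _.
by case exy: (e x y); case eyx: (e y x) => //; move: (e_asym _ _ exy); rewrite eyx.
Qed.

(* (r - k - 1) (r - k - 2) >= 0 for every integer r. *)
Lemma consecutive_prod_ge0 k r : r * (2 * k + 3) <= (k + 1) * (k + 2) + r * r.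
Proof. by have [] := leqP r k.+1; nia. Qed.

Lemma triangle_bound n k r s h : 1 < n -> r <= n + k ->
  s + r * (n - 2) <= h + r * (n + k - r) -> 2 * h <= r * r.-1 ->
  2 * s <= (k + 1) * (k + 2).
Proof.
move=> n_gt1 r_le count pairs.
have [b nkE] : exists b, n + k = r + b by exists (n + k - r); rewrite subnKC.
have rnk : r * n + r * k = r * r + r * b by rewrite -!mulnDr nkE.
have r2n : r * 2 <= r * n := leq_mul (leqnn r) n_gt1.
have rr : r * r.-1 + r = r * r by case: (r) => // r'; rewrite mulnS addnC.
have := consecutive_prod_ge0 k r.
move: count; rewrite nkE addKn mulnBr !mulnDr; lia.
Qed.

Definition triangle (n k : nat) : {set 'I_(n + k) * 'I_(n + k)} :=
  [set p : 'I_(n + k) * 'I_(n + k) | p.1 <= p.2 <= k].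

Lemma triangle_indep n k : Gindep n k (triangle n k).
Proof.
apply/andP; split.
  apply/subsetP => -[i j]; rewrite !inE /crown_inc /= => /andP[le_ij le_jk].
  by have i_lt := ltn_ord i; have j_lt := ltn_ord j; cyclic_lia.
apply/forall_inP => -[i j]; rewrite inE /= => /andP[le_ij le_jk].
apply/forall_inP => -[i' j']; rewrite inE /= => /andP[le_ij' le_jk'].
rewrite /Gadj /= negb_and !negbK /crown_inc.
have := ltn_ord i; have := ltn_ord j; have := ltn_ord i'; have := ltn_ord j'.
by move=> *; cyclic_lia.
Qed.

Lemma card_triangle n k : 0 < n -> #|triangle n k| = (k + 1) * (k + 2) %/ 2.
Proof.
move=> n_gt0; have k_lt : k < n + k by rewrite -{1}[k]add0n ltn_add2r.
rewrite card_pairs_by_snd.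
transitivity (\sum_(j < n + k | j < k.+1) j.+1).
  rewrite [RHS]big_mkcond; apply: eq_bigr => j _; rewrite ltnS.
  case: leqP => [le_jk|lt_kj].
    by rewrite -card_ord_le; apply: eq_card => i; rewrite !inE le_jk andbT.
  by rewrite -(cards0 'I_(n + k)); apply: eq_card => i; rewrite !inE [j <= k]leqNgt lt_kj andbF.
rewrite -(big_ord_widen _ (fun j => j.+1) k_lt).
have -> : \sum_(j < k.+1) j.+1 = \sum_(0 <= j < k.+2) j.
  by rewrite big_mkord [RHS]big_ord_recl.
by rewrite bin2_sum bin2 divn2 mulnC addn1 addn2.
Qed.

Section CyclicShift.
Variables n k : nat.
Hypothesis n_gt1 : 1 < n.
Local Notation m := (n + k).

Fact crown_size_gt0 : 0 < m.
Proof. by rewrite ltn_addr // ltnW. Qed.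

Definition cyc_sub (i : 'I_m) (s : nat) : 'I_m :=
  Ordinal (ltn_pmod (i + m - s) crown_size_gt0).

Lemma cyc_sub_not_inc i s : 0 < s < n -> ~~ crown_inc n k i (cyc_sub i s).
Proof.
move=> /andP[s_gt0 s_lt_n]; have i_lt := ltn_ord i.
by rewrite /crown_inc /= -ltnNge; cyclic_lia.
Qed.

Lemma cyc_sub_injl s : s < m -> injective (cyc_sub^~ s).
Proof.
move=> s_lt x y /(congr1 val) /=; have x_lt := ltn_ord x; have y_lt := ltn_ord y.
by move=> xy; apply: ord_inj; move: xy; cyclic_lia.
Qed.

Lemma cyc_sub_injr i s s' : s < m -> s' < m -> cyc_sub i s = cyc_sub i s' -> s = s'.
Proof. by move=> s_lt s'_lt /(congr1 val) /=; have i_lt := ltn_ord i; cyclic_lia. Qed.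

Lemma cyc_sub_far (i i' j : 'I_m) s : cdist m i j <= cdist m i' j <= k -> 1 < s < n ->
  cyc_sub i 1 != cyc_sub i' s.
Proof.
move=> /andP[d_le d_k] /andP[s_gt1 s_lt_n]; apply/negP => /eqP/(congr1 val) /=.
have i_lt := ltn_ord i; have i'_lt := ltn_ord i'; have j_lt := ltn_ord j.
by move: d_le d_k; rewrite /cdist; cyclic_lia.
Qed.

End CyclicShift.

Section UpperBound.
Variables (n k : nat) (S : {set 'I_(n + k) * 'I_(n + k)}).
Hypotheses (n_gt1 : 1 < n) (S_indep : Gindep n k S).
Local Notation m := (n + k).

Definition col (j : 'I_m) : {set 'I_m} := [set i | (i, j) \in S].

Definition cols : {set 'I_m} := [set j | col j != set0].

Definition below (j j' : 'I_m) : bool :=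
  [exists i in col j, crown_lt n k (inl i) (inr j')].

Lemma col_inc i j : i \in col j -> crown_inc n k i j.
Proof. by rewrite inE => ijS; case/andP: S_indep => /subsetP/(_ _ ijS); rewrite inE. Qed.

Lemma col_cross {i j i' j'} : i \in col j -> i' \in col j' ->
  crown_inc n k i j' || crown_inc n k i' j.
Proof.
rewrite !inE => ijS i'j'S; case/andP: S_indep => _ /forallP/(_ (i, j)).
move=> /implyP/(_ ijS)/forallP/(_ (i', j'))/implyP/(_ i'j'S).
by rewrite /Gadj /= negb_and !negbK.
Qed.

Lemma below_irr : irreflexive below.
Proof.
by move=> j; apply/negbTE/existsP => -[i /andP[/col_inc inc_ij]]; rewrite /= inc_ij.
Qed.

Lemma below_asym j j' : below j j' -> ~~ below j' j.
Proof.
case/existsP=> i /andP[i_col /= not_inc]; apply/existsP => -[i' /andP[i'_col /=]].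
by move: (col_cross i_col i'_col); rewrite (negbTE not_inc) /= => ->.
Qed.

Lemma card_col_below {j} : j \in cols ->
  #|col j| + (n - 2) <= #|[set j' | below j j']|.
Proof.
rewrite inE => /set0Pn[i0 i0_col].
have [ist ist_col ist_far] := arg_maxnP (fun i : 'I_m => cdist m i j) i0_col.
pose back1 := cyc_sub n k n_gt1 ^~ 1.
pose backs (s : 'I_(n - 2)) := cyc_sub n k n_gt1 ist s.+2.
have n_le_m : n <= m := leq_addr k n.
have back1_inj : injective back1 by apply: cyc_sub_injl; lia.
have backs_inj : injective backs.
  move=> s s' /cyc_sub_injr eq_ss'; apply: ord_inj.
  have := ltn_ord s; have := ltn_ord s' => *; apply: succn_inj; apply: succn_inj.
  apply: eq_ss'; lia.
have back1_below i : i \in col j -> below j (back1 i).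
  by move=> i_col; apply/existsP; exists i; rewrite i_col /=; apply: cyc_sub_not_inc.
have backs_below s : below j (backs s).
  apply/existsP; exists ist; apply/andP; split=> //=; apply: cyc_sub_not_inc.
  have := ltn_ord s; lia.
have disjoint_images : back1 @: col j :&: backs @: setT = set0.
  apply/setP => x; rewrite !inE; apply/negbTE/andP.
  move=> [/imsetP[i i_col ->] /imsetP[s _ /eqP]]; apply/negP; apply: cyc_sub_far.
    by apply/andP; split; [exact: ist_far | exact: col_inc].
  by have := ltn_ord s; lia.
have images_below : back1 @: col j :|: backs @: setT \subset [set j' | below j j'].
  apply/subsetP => x /setUP[] /imsetP[y y_in ->]; rewrite inE.
    exact: back1_below.
  exact: backs_below.
apply: leq_trans (subset_leq_card images_below).
by rewrite cardsU disjoint_images cards0 subn0 !card_imset // cardsT card_ord.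
Qed.

Lemma card_by_cols : #|S| = \sum_(j in cols) #|col j|.
Proof.
rewrite card_pairs_by_snd (bigID (mem cols)) /= [X in _ + X]big1 ?addn0 // => j.
by rewrite inE negbK => /eqP col0; rewrite -(cards0 'I_m) -col0.
Qed.

Lemma indep_card_upper : 2 * #|S| <= (k + 1) * (k + 2).
Proof.
pose h := \sum_(j in cols) #|[set j' in cols | below j j']|.
have pairs : 2 * h <= #|cols| * #|cols|.-1.
  exact: sum_card_asym below_irr below_asym.
have cols_le : #|cols| <= m by rewrite -[X in _ <= X]card_ord max_card.
have cols_compl : #|~: cols| = m - #|cols|.
  by apply/eqP; rewrite -(eqn_add2l #|cols|) cardsC card_ord subnKC.
apply: (@triangle_bound n k _ _ h n_gt1 cols_le _ pairs); rewrite -cols_compl.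
rewrite card_by_cols -sum_nat_const -big_split -sum_nat_const -big_split /=.
apply: leq_sum => j j_col; apply: leq_trans (card_col_below j_col) _.
exact: card_le_in_setC.
Qed.

End UpperBound.

Theorem theorem1p2 (n k : nat) : 3 <= n ->
  (exists S, Gindep n k S /\ #|S| = (k + 1) * (k + 2) %/ 2) /\
  (forall S, Gindep n k S -> #|S| <= (k + 1) * (k + 2) %/ 2).
Proof.
move=> n_ge3; have n_gt1 : 1 < n := ltnW n_ge3.
split.
  exists (triangle n k); split; first exact: triangle_indep.
  exact: card_triangle (ltnW n_gt1).
move=> S S_indep; rewrite leq_divRL // mulnC.
by apply: indep_card_upper.
Qed.
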